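(* Let $\mathcal{A}=\{m\ge 1:\ c_m=1\}$. A positive integer $n$ belongs to $\mathcal{A}$ if and only if, in the base-$4$ expansion of $n+1$, every digit other than the last (least significant) one is $0$ or $2$; equivalently, the binary digits of $n+1$ at positions $2k$ (i.e. with weight $2^{2k}$) are $0$ for all $k\ge 1$.
   Context: For $n\in\mathbb{N}$ let $s_2(n)$ be the sum of the binary digits of $n$ and $t_n=s_2(n)\bmod 2$ (the Prouhet–Thue–Morse sequence). Let $F(X)=\sum_{n\ge1}t_nX^n\in\mathbb{F}_2[[X]]$ and let $G(X)=\sum_{n\ge1}c_nX^n\in\mathbb{F}_2[[X]]$ be its compositional inverse, i.e. $F(G(X))=G(F(X))=X$. The $c_n$ are identified with integers in $\{0,1\}$. *)

From HB Require Import structures.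
From mathcomp Require Import all_boot all_order all_algebra.
Set Implicit Arguments. Unset Strict Implicit. Unset Printing Implicit Defensive.
Import GRing.Theory.
Local Open Scope ring_scope.

(* s_2(n): sum of the binary digits of n (digits i < n+1 cover all of n). *)
Definition s2 (n : nat) : nat := (\sum_(i < n.+1) ((n %/ 2 ^ i) %% 2))%N.

Definition tm (n : nat) : 'F_2 := ((s2 n) %% 2)%:R.

Definition Fcoef (n : nat) : 'F_2 := if n == 0%N then 0 else tm n.

(* Coefficient of X^N in the formal composition A(B(X)) of power series with
   coefficient sequences a, b (meaningful when b 0 = 0): only the terms
   a_k B^k, k <= N, and the coefficients of B of index <= N contribute. *)
Definition comp_coef (a b : nat -> 'F_2) (N : nat) : 'F_2 :=
  \sum_(k < N.+1) a k * (((\poly_(i < N.+1) b i) ^+ k)`_N).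

Definition Xcoef (N : nat) : 'F_2 := (N == 1%N)%:R.

(* Over F_2 the recurrences t_(2m) = t_m and t_(2m+1) = 1 + t_m dissect F as
   F = F(X^2) + X (F(X^2) + 1/(1 + X^2)). As F(X^2) = F^2, this is the functional
   equation (1 + X)^2 F = (1 + X)^3 F^2 + X, equivalently the cubic
   (1 + (1 + X) F)^3 = 1 + F; substituting G gives (1 + X + X G)^3 = 1 + X.
   On the other hand, the series D = sum of the X^q such that all base-4 digits
   of q are 0 or 2 satisfies D = (1 + X^2) D(X^4) = (1 + X)^2 D^4, hence
   (1 + X)^2 D^3 = 1, and W = (1 + X + X^2 + X^3) D(X^4) = (1 + X)^3 D^4 satisfies
   W^3 = 1 + X. As 1 + X has only one cube root with constant term 1, we get
   1 + X + X G = W, and the coefficients of X^(n+1) give the theorem.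
   Power series are represented by their truncations \poly_(i < M), and each
   identity is proved modulo X^M for every M. *)

From mathcomp Require Import all_boot all_order all_algebra.
From mathcomp Require Import zify ring.
Import GRing.Theory.
Set Implicit Arguments. Unset Strict Implicit.
Local Open Scope ring_scope.

Section CongruenceModXn.
Variable R : fieldType.
Implicit Types (p q r u : {poly R}) (M : nat).

Lemma dvdp_XnP M p : reflect (forall i, (i < M)%N -> p`_i = 0) ('X^M %| p).
Proof.
apply: (iffP idP) => [/dvdpP [q ->] i lt_iM | p_lowM].
  by rewrite coefMXn lt_iM.
rewrite -(poly_take_drop M p) (_ : take_poly M p = 0) ?add0r ?dvdp_mull //.
by apply/polyP => i; rewrite coef_take_poly coef0; case: ifP => // /p_lowM.
Qed.

Definition eqmodXn M p q := 'X^M %| p - q.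

Lemma eqmodXnP M p q :
  reflect (forall i, (i < M)%N -> p`_i = q`_i) (eqmodXn M p q).
Proof.
apply: (iffP (dvdp_XnP _ _)) => eq_pq i lt_iM.
  by apply: subr0_eq; rewrite -coefB eq_pq.
by rewrite coefB eq_pq ?subrr.
Qed.

Lemma eqmodXn_refl M p : eqmodXn M p p.
Proof. exact/eqmodXnP. Qed.

Lemma eqmodXn_sym M p q : eqmodXn M p q -> eqmodXn M q p.
Proof. by move/eqmodXnP=> eq_pq; apply/eqmodXnP=> i /eq_pq. Qed.

Lemma eqmodXn_trans M p q r : eqmodXn M p q -> eqmodXn M q r -> eqmodXn M p r.
Proof. by move=> /eqmodXnP pq /eqmodXnP qr; apply/eqmodXnP=> i lt_iM; rewrite pq ?qr. Qed.

Lemma eqmodXnD M p q p' q' :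
  eqmodXn M p q -> eqmodXn M p' q' -> eqmodXn M (p + p') (q + q').
Proof. by rewrite /eqmodXn opprD addrACA; apply: dvdp_add. Qed.

Lemma eqmodXnMl M r p q : eqmodXn M p q -> eqmodXn M (r * p) (r * q).
Proof. by rewrite /eqmodXn -mulrBr; apply: dvdp_mull. Qed.

Lemma eqmodXnM M p q p' q' :
  eqmodXn M p q -> eqmodXn M p' q' -> eqmodXn M (p * p') (q * q').
Proof.
move=> pq pq'; apply: (eqmodXn_trans (eqmodXnMl p pq')).
by rewrite ![_ * q']mulrC; apply: eqmodXnMl.
Qed.

Lemma eqmodXnX M n p q : eqmodXn M p q -> eqmodXn M (p ^+ n) (q ^+ n).
Proof.
move=> pq; elim: n => [|n IHn]; first exact: eqmodXn_refl.
by rewrite !exprS; apply: eqmodXnM.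
Qed.

Lemma eqmodXn_comp_poly_l M r p q :
  'X %| r -> eqmodXn M p q -> eqmodXn M (p \Po r) (q \Po r).
Proof.
move=> /dvdpP [s ->] /dvdpP [t pq].
rewrite /eqmodXn -comp_polyB pq comp_polyM comp_Xn_poly exprMn mulrA.
exact: dvdp_mull.
Qed.

Lemma eqmodXn_comp_poly_r M r p q :
  eqmodXn M p q -> eqmodXn M (r \Po p) (r \Po q).
Proof.
rewrite /eqmodXn !comp_polyE -sumrB => pq.
apply: (big_ind (fun s => 'X^M %| s)) => [||i _]; [exact: dvdp0 | exact: dvdp_add |].
by rewrite -scalerBr subrXX -mul_polyC mulrA; apply/dvdp_mulr/dvdp_mull.
Qed.

Lemma eqmodXn_cancel M u p q :
  u`_0 != 0 -> eqmodXn M (p * u) (q * u) -> eqmodXn M p q.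
Proof.
move=> u0; rewrite /eqmodXn -mulrBl Gauss_dvdpl //.
apply: coprimep_expl; rewrite coprimep_sym.
by have := coprimep_XsubC u 0; rewrite subr0 => ->; rewrite /root horner_coef0.
Qed.

Lemma eqmodXn_poly M N (a : nat -> R) :
  (M <= N)%N -> eqmodXn M (\poly_(i < N) a i) (\poly_(i < M) a i).
Proof.
by move=> le_MN; apply/eqmodXnP=> i lt_iM; rewrite !coef_poly lt_iM (leq_trans lt_iM).
Qed.

Lemma dvdp_X_poly N (a : nat -> R) : a 0%N = 0 -> 'X %| \poly_(i < N) a i.
Proof.
move=> a0; apply/(dvdp_XnP 1) => i; rewrite ltnS leqn0 => /eqP ->.
by rewrite coef_poly; case: ifP.
Qed.

Lemma eqmodXn_geometric M : eqmodXn M ((1 - 'X) * \poly_(i < M) 1) 1.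
Proof.
rewrite poly_def (eq_bigr (fun i : 'I_M => 'X^i)) => [|i _]; last exact: scale1r.
rewrite -opprB mulNr -subrX1 opprB /eqmodXn addrAC subrr add0r.
by rewrite dvdpNr dvdpp.
Qed.

Lemma eqmodXn_cube_inj M (V W : {poly R}) :
  (3%:R : R) != 0 -> V`_0 = 1 -> W`_0 = 1 ->
  eqmodXn M (V ^+ 3) (W ^+ 3) -> eqmodXn M V W.
Proof.
move=> three_neq0 V0 W0 eq_cube.
apply: (@eqmodXn_cancel _ (V ^+ 2 + V * W + W ^+ 2)).
  by rewrite !coefD !expr2 !coef0M V0 W0 !mulr1 (_ : 1 + 1 + 1 = 3%:R) //; ring.
by rewrite /eqmodXn (_ : _ - _ = V ^+ 3 - W ^+ 3) //; ring.
Qed.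

End CongruenceModXn.

Lemma coefXnM_comp_poly_Xn (R : nzSemiRingType) (p : {poly R}) k s q r :
  (s < k)%N -> (r < k)%N ->
  ('X^s * (p \Po 'X^k))`_(q * k + r) = (s == r)%:R * p`_q.
Proof.
move=> lt_sk lt_rk; rewrite coefXnM coef_comp_poly_Xn ?(leq_ltn_trans _ lt_sk) //.
have [<-|neq_sr] := eqVneq s r.
  by rewrite ltnNge leq_addl /= addnK dvdn_mull // mulnK ?(leq_ltn_trans _ lt_sk) // mul1r.
rewrite mul0r; case: ltnP => // le_s; case: ifP => // /dvdnP [t def_t].
have : (q * k + r = t * k + s)%N by lia.
move/(congr1 (modn^~ k)); rewrite !modnMDl !modn_small // => eq_rs.
by rewrite eq_rs eqxx in neq_sr.
Qed.

Lemma coef_comp_poly_Xn_mulnD (R : nzSemiRingType) (p : {poly R}) k q r :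
  (0 < k)%N -> (r < k)%N -> (p \Po 'X^k)`_(q * k + r) = (r == 0)%N%:R * p`_q.
Proof.
by move=> k_gt0 lt_rk; have := coefXnM_comp_poly_Xn p q k_gt0 lt_rk; rewrite mul1r eq_sym.
Qed.

Lemma comp_coefE (a b : nat -> 'F_2) N :
  comp_coef a b N = ((\poly_(i < N.+1) a i) \Po (\poly_(i < N.+1) b i))`_N.
Proof.
rewrite /comp_coef [\poly_(i < _) a i]poly_def raddf_sum coef_sum.
by apply: eq_bigr => i _; rewrite /= comp_polyZ comp_Xn_poly coefZ.
Qed.

Lemma comp_coef_trunc M (a b : nat -> 'F_2) N : b 0%N = 0 -> (N < M)%N ->
  ((\poly_(i < M) a i) \Po (\poly_(i < M) b i))`_N = comp_coef a b N.
Proof.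
move=> b0 lt_NM; rewrite comp_coefE; apply/(eqmodXnP N.+1) => //.
apply: (eqmodXn_trans (eqmodXn_comp_poly_l (dvdp_X_poly _ b0) (eqmodXn_poly _ lt_NM))).
exact/eqmodXn_comp_poly_r/eqmodXn_poly.
Qed.

Lemma F2_mulrr (c : 'F_2) : c * c = c.
Proof. by case: c => [[|[|]] //] ?; apply/val_inj. Qed.

Lemma F2_natr2 : 2%:R = 0 :> 'F_2.
Proof. by rewrite -Fp_nat_mod. Qed.

(* [ring] ignores the characteristic: identities in F_2[X] are proved up to an
   explicit multiple of 2. *)
Lemma F2poly_natr2 : 2%:R = 0 :> {poly 'F_2}.
Proof. by rewrite -polyC_natr F2_natr2. Qed.

Lemma F2poly_sqrE (p : {poly 'F_2}) : p ^+ 2 = p \Po 'X^2.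
Proof.
elim/poly_ind: p => [|p c IHp]; first by rewrite expr2 mul0r comp_poly0.
rewrite comp_polyD comp_polyM comp_polyX comp_polyC -IHp.
have -> : (p * 'X + c%:P) ^+ 2 = p ^+ 2 * 'X^2 + (c * c)%:P + 2%:R * (p * 'X * c%:P).
  by rewrite polyCM; ring.
by rewrite F2poly_natr2 mul0r addr0 F2_mulrr.
Qed.

Lemma F2poly_X4E (p : {poly 'F_2}) : p ^+ 4 = p \Po 'X^4.
Proof.
rewrite [4%N](_ : _ = 2 * 2)%N // exprM (F2poly_sqrE (p ^+ 2)) (F2poly_sqrE p).
by rewrite -comp_polyA comp_Xn_poly -exprM.
Qed.

Lemma F2poly_sqr1X : (1 + 'X) ^+ 2 = 1 + 'X^2 :> {poly 'F_2}.
Proof. by rewrite F2poly_sqrE comp_polyD comp_polyC comp_polyX. Qed.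

Lemma F2poly_oppr (p : {poly 'F_2}) : - p = p.
Proof.
by apply/eqP; rewrite eq_sym -subr_eq0 opprK -mulr2n -mulr_natl F2poly_natr2 mul0r.
Qed.

Lemma s2_widen n d : s2 n = (\sum_(i < n.+1 + d) ((n %/ 2 ^ i) %% 2))%N.
Proof.
elim: d => [|d IHd]; first by rewrite addn0.
rewrite addnS big_ord_recr /= -IHd divn_small ?addn0 //.
by apply: leq_trans (ltn_expl _ (ltnSn 1)) _; rewrite leq_exp2l //; lia.
Qed.

Lemma s2_mul2D m b : (b < 2)%N -> s2 (m * 2 + b) = (b + s2 m)%N.
Proof.
move=> lt_b2; rewrite (s2_widen _ 1) addn1 big_ord_recl /= expn0 divn1.
rewrite modnMDl modn_small //; congr (_ + _)%N.
rewrite (s2_widen m (m + b)) (_ : m.+1 + (m + b) = (m * 2 + b).+1)%N; last lia.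
apply: eq_bigr => i _.
by rewrite /bump /= add1n expnS divnMA divnMDl // (divn_small lt_b2) addn0.
Qed.

Lemma Fcoef_mul2D m b : (b < 2)%N -> Fcoef (m * 2 + b) = b%:R + Fcoef m.
Proof.
move=> lt_b2; rewrite /Fcoef /tm s2_mul2D // !Fp_nat_mod // natrD.
case: m => [|m]; last by rewrite mulSn.
have s2_0 : s2 0 = 0%N by rewrite /s2 big_ord1.
by case: b lt_b2 => [|[|]] //; rewrite s2_0 addr0.
Qed.

Definition Ftrunc M : {poly 'F_2} := \poly_(i < M) Fcoef i.

(* [\poly_(i < M) 1] stands for 1/(1 + X), as t_(2m+1) = t_m + 1. *)
Lemma Ftrunc_dissect M : eqmodXn M (Ftrunc M)
  (Ftrunc M \Po 'X^2 + 'X * ((Ftrunc M + \poly_(i < M) 1) \Po 'X^2)).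
Proof.
apply/eqmodXnP => i lt_iM.
have lt_qM : (i %/ 2 < M)%N by apply: leq_ltn_trans (leq_div _ _) lt_iM.
have lt_r2 : (i %% 2 < 2)%N by rewrite ltn_mod.
rewrite (divn_eq i 2) in lt_iM *.
rewrite coefD coef_comp_poly_Xn_mulnD // (coefXnM_comp_poly_Xn _ _ (s := 1)) //.
rewrite coefD !coef_poly lt_iM lt_qM Fcoef_mul2D //.
by case: (i %% 2)%N lt_r2 => [|[|]] //= _; rewrite ?(mul1r, mul0r, add0r, addr0) // addrC.
Qed.

Lemma Ftrunc_funeq M :
  eqmodXn M ((1 + 'X) ^+ 2 * Ftrunc M) ((1 + 'X) ^+ 3 * Ftrunc M ^+ 2 + 'X).
Proof.
set f := Ftrunc M; set u := \poly_(i < M) (1 : 'F_2).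
have geo : eqmodXn M ((1 + 'X) * u) 1.
  by rewrite -[X in 1 + X]F2poly_oppr; apply: eqmodXn_geometric.
have := eqmodXnMl ((1 + 'X) ^+ 2) (Ftrunc_dissect M); rewrite -!F2poly_sqrE.
have -> : (1 + 'X) ^+ 2 * (f ^+ 2 + 'X * (f + u) ^+ 2) =
    (1 + 'X) ^+ 3 * f ^+ 2 + 'X * ((1 + 'X) * u) ^+ 2 + 2%:R * ('X * (1 + 'X) ^+ 2 * f * u).
  by ring.
rewrite F2poly_natr2 mul0r addr0 => /eqmodXn_trans; apply.
apply: eqmodXnD (eqmodXn_refl _ _) _.
by have := eqmodXnMl 'X (eqmodXnX 2 geo); rewrite expr1n mulr1.
Qed.

Lemma Ftrunc_cubic M :
  eqmodXn M ((1 + Ftrunc M + 'X * Ftrunc M) ^+ 3) (1 + Ftrunc M).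
Proof.
have := eqmodXnMl (Ftrunc M) (Ftrunc_funeq M); rewrite /eqmodXn -mulrBr.
set f := Ftrunc M; set y := (1 + 'X) * f.
have -> : (1 + f + 'X * f) ^+ 3 - (1 + f) =
    f * ((1 + 'X) ^+ 2 * f - ((1 + 'X) ^+ 3 * f ^+ 2 + 'X))
    + 2%:R * (f + 2%:R * 'X * f + y ^+ 2 + y ^+ 3).
  by rewrite /y; ring.
by rewrite F2poly_natr2 mul0r addr0.
Qed.

Lemma comp_inverse_cubic (c : nat -> 'F_2) M : c 0%N = 0 ->
  (forall N, comp_coef Fcoef c N = Xcoef N) ->
  eqmodXn M ((1 + 'X + 'X * \poly_(i < M) c i) ^+ 3) (1 + 'X).
Proof.
move=> c0 FoG_X; set g := \poly_(i < M) c i.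
have X_dvd_g : 'X %| g by exact: dvdp_X_poly.
have FoG : eqmodXn M (Ftrunc M \Po g) 'X.
  by apply/eqmodXnP => N lt_NM; rewrite comp_coef_trunc // FoG_X coefX.
have := eqmodXn_comp_poly_l X_dvd_g (Ftrunc_cubic M).
rewrite rmorphXn /= !comp_polyD comp_polyM comp_polyX rmorph1 (mulrC 'X g) => cubic.
apply: eqmodXn_trans (eqmodXn_trans cubic (eqmodXnD (eqmodXn_refl _ 1) FoG)).
apply/eqmodXnX/eqmodXnD; first apply: eqmodXnD (eqmodXn_refl _ _) _.
  exact: eqmodXn_sym.
exact/eqmodXnMl/eqmodXn_sym.
Qed.

Definition digit4_even (x : nat) : bool := ((x %% 4 == 0) || (x %% 4 == 2))%N.

Definition digits4_even (q : nat) : bool :=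
  [forall k : 'I_q.+1, digit4_even (q %/ 4 ^ k)].

Lemma digits4_evenP q :
  reflect (forall k, digit4_even (q %/ 4 ^ k)) (digits4_even q).
Proof.
apply: (iffP forallP) => [digits_q k|]; last by move=> digits_q k.
have [lt_qk|le_kq] := ltnP q k; last exact: (digits_q (Ordinal (le_kq : k < q.+1)%N)).
rewrite divn_small //; apply: leq_trans (ltn_expl _ (isT : 1 < 4)%N) _.
by rewrite leq_exp2l // ltnW.
Qed.

Lemma digits4_even0 : digits4_even 0.
Proof. by apply/digits4_evenP => k; rewrite div0n. Qed.

Lemma digits4_even_mul4D q r : (r < 4)%N ->
  digits4_even (q * 4 + r) = digit4_even r && digits4_even q.
Proof.
move=> lt_r4; have div_qr k : ((q * 4 + r) %/ 4 ^ k.+1 = q %/ 4 ^ k)%N.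
  by rewrite expnS divnMA divnMDl // (divn_small lt_r4) addn0.
have last_qr : digit4_even (q * 4 + r) = digit4_even r by rewrite /digit4_even modnMDl.
apply/digits4_evenP/andP => [digits_qr | [digit_r /digits4_evenP digits_q] [|k]].
- split; first by have := digits_qr 0%N; rewrite expn0 divn1 last_qr.
  by apply/digits4_evenP => k; rewrite -div_qr; apply: digits_qr.
- by rewrite expn0 divn1 last_qr.
- by rewrite div_qr; apply: digits_q.
Qed.

Lemma digits4_even_div4P m :
  reflect (forall k, (0 < k)%N -> digit4_even (m %/ 4 ^ k)) (digits4_even (m %/ 4)).
Proof.
apply: (iffP (digits4_evenP _)) => [digits_m [|k] // _ | digits_m k].
  by rewrite expnS divnMA; apply: digits_m.
by rewrite -divnMA -expnS; apply: digits_m.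
Qed.

Definition Dtrunc M : {poly 'F_2} := \poly_(i < M) (digits4_even i)%:R.
Definition Wtrunc M : {poly 'F_2} := \poly_(i < M) (digits4_even (i %/ 4))%:R.

Lemma Dtrunc_dissect M :
  eqmodXn M (Dtrunc M) ((1 + 'X^2) * (Dtrunc M \Po 'X^4)).
Proof.
apply/eqmodXnP => i lt_iM.
have lt_qM : (i %/ 4 < M)%N by apply: leq_ltn_trans (leq_div _ _) lt_iM.
have lt_r4 : (i %% 4 < 4)%N by rewrite ltn_mod.
rewrite (divn_eq i 4) in lt_iM *.
rewrite mulrDl mul1r coefD coef_comp_poly_Xn_mulnD // coefXnM_comp_poly_Xn //.
rewrite !coef_poly lt_iM lt_qM digits4_even_mul4D //.
by case: (i %% 4)%N lt_r4 => [|[|[|[|]]]] //= _; rewrite ?(mul1r, mul0r, add0r, addr0).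
Qed.

Lemma Wtrunc_dissect M :
  eqmodXn M (Wtrunc M) ((1 + 'X + 'X^2 + 'X^3) * (Dtrunc M \Po 'X^4)).
Proof.
apply/eqmodXnP => i lt_iM.
have lt_qM : (i %/ 4 < M)%N by apply: leq_ltn_trans (leq_div _ _) lt_iM.
have lt_r4 : (i %% 4 < 4)%N by rewrite ltn_mod.
rewrite (divn_eq i 4) in lt_iM *.
rewrite !mulrDl mul1r !coefD coef_comp_poly_Xn_mulnD //.
rewrite (coefXnM_comp_poly_Xn _ _ (s := 1)) //.
rewrite !coefXnM_comp_poly_Xn // !coef_poly lt_iM lt_qM divnMDl // (divn_small lt_r4) addn0.
by case: (i %% 4)%N lt_r4 => [|[|[|[|]]]] //= _; rewrite ?(mul1r, mul0r, add0r, addr0).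
Qed.

Lemma Wtrunc_cube M : eqmodXn M (Wtrunc M ^+ 3) (1 + 'X).
Proof.
case: M => [|M]; first exact/eqmodXnP.
set d := Dtrunc M.+1.
have d0 : d`_0 != 0 by rewrite coef_poly /= digits4_even0 oner_neq0.
have dD := Dtrunc_dissect M.+1; rewrite -F2poly_sqr1X -F2poly_X4E -/d in dD.
have dW := Wtrunc_dissect M.+1.
rewrite -F2poly_X4E -/d (_ : 1 + 'X + 'X^2 + 'X^3 = (1 + 'X) ^+ 3) in dW; last first.
  by rewrite [(1 + 'X) ^+ 3]exprS F2poly_sqr1X; ring.
have unit_d : eqmodXn M.+1 ((1 + 'X) ^+ 2 * d ^+ 3) 1.
  by apply: (eqmodXn_cancel d0); rewrite mul1r -mulrA -exprSr; apply: eqmodXn_sym.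
apply: eqmodXn_trans (eqmodXnX 3 dW) _.
rewrite (_ : ((1 + 'X) ^+ 3 * d ^+ 4) ^+ 3 = (1 + 'X) * ((1 + 'X) ^+ 2 * d ^+ 3) ^+ 4).
  by have := eqmodXnMl (1 + 'X) (eqmodXnX 4 unit_d); rewrite expr1n mulr1.
by ring.
Qed.

Theorem mainTheorem4 (c : nat -> 'F_2)
  (hc0 : c 0%N = 0)
  (hFG : forall N, comp_coef Fcoef c N = Xcoef N)
  (hGF : forall N, comp_coef c Fcoef N = Xcoef N) :
  forall n : nat, (0 < n)%N ->
    (c n = 1 <->
     (forall k : nat, (0 < k)%N ->
        ((n.+1 %/ 4 ^ k) %% 4 == 0)%N || ((n.+1 %/ 4 ^ k) %% 4 == 2)%N)).
Proof.
move=> n n_gt0; set V := 1 + 'X + 'X * \poly_(i < n.+2) c i.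
have V0 : V`_0 = 1 by rewrite !coefD coefXM coef1 coefX !addr0.
have W0 : (Wtrunc n.+2)`_0 = 1 by rewrite coef_poly /= digits4_even0.
have three_neq0 : (3%:R : 'F_2) != 0 by rewrite -Fp_nat_mod // oner_eq0.
have V_W : eqmodXn n.+2 V (Wtrunc n.+2).
  apply: eqmodXn_cube_inj three_neq0 V0 W0 _.
  exact: eqmodXn_trans (comp_inverse_cubic _ hc0 hFG) (eqmodXn_sym (Wtrunc_cube _)).
move/eqmodXnP/(_ n.+1 (ltnSn _)): V_W.
rewrite !coefD coefXM coef1 coefX !coef_poly /= ltnSn leqnSn eqSS eqn0Ngt n_gt0 !add0r => ->.
split=> [W1 | /digits4_even_div4P -> //]; apply/digits4_even_div4P.
by move: W1; case: digits4_even => // /eqP; rewrite eq_sym oner_eq0.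
Qed.
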